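(* Let $\Phi\in\mathcal G'$ and $m\in\mathbb N$. Then $\Phi\in\mathcal D^{-m,2}$ if and only if \[ \int_0^1\int_0^{\lambda_m}\cdots\int_0^{\lambda_2}\int_{\mathcal S'_{\mathbb C}}|S\Phi(\lambda_1u)|^2\,d\nu(u)\,d\lambda_1\cdots d\lambda_m<\infty . \]
   Context: Let $\mu$ be the white noise measure on the tempered distributions $\mathcal S'$ (Gaussian with $\int e^{i\langle\xi,x\rangle}d\mu=e^{-|\xi|^2/2}$, $\xi\in\mathcal S$, $|\cdot|$ the $L^2$ norm). For $s\in\mathbb R$, $\mathcal G_s$ is the space of formal chaos series $\Phi=\sum_{n\ge0}\langle\Phi^{(n)},:\cdot^{\otimes n}:\rangle$ (Wick-ordered monomials / multiple Wiener integrals) with symmetric kernels $\Phi^{(n)}\in L^2(\mathbb R^n,dx)_{\mathbb C}$ and $\sum_n2^{2sn}n!|\Phi^{(n)}|^2<\infty$, and $\mathcal G'=\bigcup_{q\in\mathbb N}\mathcal G_{-q}$. The $S$-transform is $S\Phi(h)=\sum_n\langle\Phi^{(n)},h^{\otimes n}\rangle$, $h\in\mathcal S_{\mathbb C}$. Let $\nu$ be the Gaussian measure on $\mathcal S'_{\mathbb C}$ with $\int\exp(i\,\mathrm{Re}\langle h,\bar u\rangle)d\nu(u)=\exp(-\tfrac14\langle h,\bar h\rangle)$; the monomials $u\mapsto\langle\Phi^{(n)},u^{\otimes n}\rangle$ are defined in $L^2(\nu)$, orthogonal for different $n$, with $\int|\langle\Phi^{(n)},u^{\otimes n}\rangle|^2d\nu=n!|\Phi^{(n)}|^2$,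 and $S\Phi(\lambda u):=\sum_n\lambda^n\langle\Phi^{(n)},u^{\otimes n}\rangle$, so that $\lambda\mapsto\int|S\Phi(\lambda u)|^2d\nu(u)\in[0,\infty]$ is defined. For $\alpha\in\mathbb R$, $\Phi\in\mathcal G'$ belongs to $\mathcal D^{\alpha,2}$ iff $\sum_{n}(1+n^\alpha)\,n!\,|\Phi^{(n)}|^2<\infty$ (for $\alpha<0$ only the terms $n\ge1$ matter for this convergence). *)

From HB Require Import structures.
From mathcomp Require Import all_boot all_order all_algebra.
From mathcomp Require Import all_classical all_reals all_analysis.
Set Implicit Arguments. Unset Strict Implicit. Unset Printing Implicit Defensive.
Import Order.TTheory GRing.Theory Num.Theory.
Local Open Scope classical_set_scope.
Local Open Scope ring_scope.

(* Abstract setting: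
   - [k n] stands for the L^2 norm |Phi^(n)| of the n-th chaos kernel of Phi;
   - on a probability space (Omega, nu), [Mre n] and [Mim n] are the real and
     imaginary parts of the monomial u |-> <Phi^(n), u^{(x) n}>. *)

(* The hypotheses on the monomials stated in the context: measurable,
   pairwise orthogonal in L^2(nu; C), with int |<Phi^(n),u^n>|^2 dnu = n! |Phi^(n)|^2. *)
Definition chaos_monomials (R : realType) (d : measure_display)
  (Omega : measurableType d) (nu : probability Omega R)
  (k : nat -> R) (Mre Mim : nat -> Omega -> R) : Prop :=
  [/\ forall n, measurable_fun setT (Mre n),
      forall n, measurable_fun setT (Mim n),
      forall n, (\int[nu]_(u in setT) ((Mre n u) ^+ 2 + (Mim n u) ^+ 2)%:E
                 = (n`!%:R * k n ^+ 2)%:E)%E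
    & forall n j, n != j ->
        (\int[nu]_(u in setT) (Mre n u * Mre j u + Mim n u * Mim j u)%:E = 0)%E
        /\ (\int[nu]_(u in setT) (Mim n u * Mre j u - Mre n u * Mim j u)%:E = 0)%E].

(* Phi in G' = union_q G_{-q}. *)
Definition in_Gdual (R : realType) (k : nat -> R) : Prop :=
  exists q : nat,
    (\sum_(0 <= n <oo) (((2 : R) ^- (2 * q * n)) * n`!%:R * k n ^+ 2)%:E < +oo)%E.

Definition in_D_neg (R : realType) (m : nat) (k : nat -> R) : Prop :=
  (\sum_(0 <= n <oo) ((1 + n%:R) ^- m * n`!%:R * k n ^+ 2)%:E < +oo)%E.

(* lambda |-> int |S Phi(lambda u)|^2 dnu(u) in [0, +oo], the L^2(nu) norm of the
   series sum_n lambda^n <Phi^(n), u^n>, as the limit of the L^2 norms of its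
   partial sums. *)
Definition S_norm2 (R : realType) (d : measure_display)
  (Omega : measurableType d) (nu : probability Omega R)
  (Mre Mim : nat -> Omega -> R) (lam : R) : \bar R :=
  limn (fun N : nat =>
    (\int[nu]_(u in setT)
       ((\sum_(n < N) lam ^+ n * Mre n u) ^+ 2
        + (\sum_(n < N) lam ^+ n * Mim n u) ^+ 2)%:E)%E).

(* iter_int m f x = int_0^x int_0^{l_m} ... int_0^{l_2} f(l_1) dl_1 ... dl_m *)
Fixpoint iter_int (R : realType) (m : nat) (f : R -> \bar R) : R -> \bar R :=
  match m with
  | 0 => f
  | m'.+1 => fun x => (\int[@lebesgue_measure R]_(t in `[0%R, x]) iter_int m' f t)%E
  end.

From HB Require Import structures.
From mathcomp Require Import all_boot all_order all_algebra.
From mathcomp Require Import all_classical all_reals all_analysis.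
From mathcomp Require Import ring lra zify measurable_realfun.
Set Implicit Arguments.
Unset Strict Implicit.
Unset Printing Implicit Defensive.
Import Order.TTheory GRing.Theory Num.Theory numFieldNormedType.Exports.
Local Open Scope ring_scope.

(* By orthogonality of the chaos monomials, the map lam |-> int |S Phi(lam u)|^2 dnu(u)
   is the power series sum_n n! |Phi^(n)|^2 lam^(2n) with nonnegative coefficients.
   Integrating it m times termwise (Tonelli) divides the n-th term by
   (2n+1)(2n+2)...(2n+m) = (2n+m)^_m, and (n+1)^m <= (2n+m)^_m <= ((m+2)(n+1))^m, so at
   lam = 1 the iterated integral and the D^(-m,2) norm of Phi are comparable series. *)

Lemma ffact_le_expn b n m : (n <= b)%N -> (n ^_ m <= b ^ m)%N.
Proof.
move=> nb; rewrite ffact_prod -[X in (_ <= _ ^ X)%N](card_ord m) -prod_nat_const.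
by apply: leq_prod => i _; rewrite (leq_trans (leq_subr _ _)).
Qed.

Lemma expn_le_ffact a n m :
  (forall i, (i < m)%N -> (a <= n - i)%N) -> (a ^ m <= n ^_ m)%N.
Proof.
move=> le_a; rewrite ffact_prod -[X in (_ ^ X <= _)%N](card_ord m) -prod_nat_const.
by apply: leq_prod => i _; exact: le_a.
Qed.

Lemma expn_le_ffact_double n m : (n.+1 ^ m <= (2 * n + m) ^_ m)%N.
Proof. by apply: expn_le_ffact => i; lia. Qed.

Lemma ffact_double_le n m : ((2 * n + m) ^_ m <= (m.+2 * n.+1) ^ m)%N.
Proof. by apply: ffact_le_expn; nia. Qed.

Lemma ffact_addn_gt0 n m : (0 < (n + m) ^_ m)%N.
Proof. by rewrite ffact_gt0 leq_addl. Qed.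

Lemma inv_ffact_double_le (R : realType) n m :
  ((2 * n + m)%N ^_ m)%:R^-1 <= (1 + n%:R) ^- m :> R.
Proof.
rewrite addrC natr1 -natrX lef_pV2 ?posrE ?ltr0n ?expn_gt0 ?ffact_addn_gt0 //.
by rewrite ler_nat expn_le_ffact_double.
Qed.

Lemma le_inv_ffact_double (R : realType) n m :
  (1 + n%:R) ^- m <= (m.+2 ^ m)%:R / ((2 * n + m)%N ^_ m)%:R :> R.
Proof.
rewrite addrC natr1 -natrX ler_pdivlMr ?ltr0n ?ffact_addn_gt0 //.
rewrite mulrC ler_pdivrMr ?ltr0n ?expn_gt0 // -natrM ler_nat -expnMn.
exact: ffact_double_le.
Qed.

Lemma nneseries_lty_le (R : realType) (u v : nat -> R) (c : R) :
  0 < c -> (forall n, 0 <= u n) -> (forall n, u n <= c * v n) ->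
  (\sum_(0 <= n <oo) (v n)%:E < +oo)%E -> (\sum_(0 <= n <oo) (u n)%:E < +oo)%E.
Proof.
move=> c0 u0 le_uv v_fin.
have v0 n : 0 <= v n by rewrite -(pmulr_rge0 _ c0) (le_trans (u0 n)).
have cv_fin : (c%:E * \sum_(0 <= n <oo) (v n)%:E < +oo)%E.
  by rewrite lte_mul_pinfty ?lee_fin ?ltW.
apply: le_lt_trans cv_fin; rewrite -nneseriesZl; last by move=> n _; rewrite lee_fin.
by apply: lee_nneseries => n _; rewrite ?lee_fin ?EFinM.
Qed.

Lemma integral_itv0_exprn (R : realType) (p : nat) (x : R) : 0 <= x ->
  (\int[@lebesgue_measure R]_(t in `[0%R, x]) (t ^+ p)%:E =
   (x ^+ p.+1 / p.+1%:R)%:E)%E.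
Proof.
rewrite le_eqVlt => /predU1P[<-|x0].
  by rewrite set_itv1 integral_set1 expr0n /= mul0r.
have cF : continuous (fun t : R => t ^+ p.+1 / p.+1%:R).
  by move=> t; apply: cvgM; [exact: exprn_continuous | exact: cvg_cst].
rewrite (@continuous_FTC2 _ _ (fun t : R => t ^+ p.+1 / p.+1%:R)) //.
- by rewrite expr0n /= mul0r oppr0 adde0.
- by apply: continuous_subspaceT => t; exact: exprn_continuous.
- split.
  + by move=> t _; apply: derivableM; [exact: exprn_derivable | exact: derivable_cst].
  + exact/cvg_at_right_filter/cF.
  + exact/cvg_at_left_filter/cF.
- move=> t _; rewrite derive1Mr; last exact: exprn_derivable.
  by rewrite exp_derive1 /= -mulrA mulrC -mulrA [_^-1 * _]mulrC mulfV ?mulr1.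
Qed.

Lemma iter_int_nneseries_exprn (R : realType) (f : R -> \bar R)
    (c : nat -> R) (p : nat -> nat) (m : nat) (t : R) :
  (forall n, 0 <= c n) ->
  (forall x, 0 <= x -> (f x = \sum_(0 <= n <oo) (c n * x ^+ p n)%:E)%E) ->
  0 <= t ->
  (iter_int m f t =
   \sum_(0 <= n <oo) (c n * t ^+ (p n + m) / ((p n + m) ^_ m)%:R)%:E)%E.
Proof.
move=> c0 f_series; elim: m t => [|m IH] t t0.
  by rewrite /= f_series //; apply: eq_eseriesr => n _; rewrite addn0 divr1.
have term_ge0 n x : 0 <= x -> 0 <= c n * x ^+ (p n + m) / ((p n + m) ^_ m)%:R.
  by move=> x0; rewrite mulr_ge0 ?invr_ge0 // mulr_ge0 // exprn_ge0.
transitivity (\int[@lebesgue_measure R]_(x in `[0%R, t])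
  \sum_(0 <= n <oo) (c n * x ^+ (p n + m) / ((p n + m) ^_ m)%:R)%:E)%E.
  by apply: eq_integral => x; rewrite inE /= in_itv /= => /andP[x0 _]; exact: IH.
rewrite integral_nneseries //; last first.
- by move=> n x; rewrite /= in_itv /= => /andP[x0 _]; rewrite lee_fin term_ge0.
- move=> n; apply/measurable_EFinP; apply: measurable_funM => //.
  by apply: measurable_funM => //; exact: measurable_funX.
apply: eq_eseriesr => n _.
under eq_integral do rewrite mulrAC EFinM.
rewrite ge0_integralZl_EFin //; last first.
- by rewrite mulr_ge0 ?invr_ge0.
- by apply/measurable_EFinP; exact: measurable_funX.
- by move=> x; rewrite /= in_itv /= => /andP[x0 _]; rewrite lee_fin exprn_ge0.
rewrite integral_itv0_exprn // -EFinM addnS ffactSS natrM invfM; congr EFin.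
ring.
Qed.

Section chaos_monomials.
Context {R : realType} {d : measure_display} {Omega : measurableType d}.
Context {nu : probability Omega R} {k : nat -> R} {Mre Mim : nat -> Omega -> R}.
Hypothesis chaos : chaos_monomials nu k Mre Mim.

Lemma chaos_sq_integrable n :
  nu.-integrable setT (fun u => (Mre n u ^+ 2 + Mim n u ^+ 2)%:E).
Proof.
case: chaos => mMre mMim int_sq _; apply/integrableP; split.
  by apply/measurable_EFinP; apply: measurable_funD; apply: measurable_funX.
under eq_integral => u _ do rewrite gee0_abs ?lee_fin ?addr_ge0 ?sqr_ge0 //.
by rewrite int_sq ltry.
Qed.

Lemma chaos_cross_integrable n j :
  nu.-integrable setT (fun u => (Mre n u * Mre j u + Mim n u * Mim j u)%:E).
Proof.
case: chaos => mMre mMim _ _.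
apply: (le_integrable measurableT _ _
  (integrableD measurableT (chaos_sq_integrable n) (chaos_sq_integrable j))).
  by apply/measurable_EFinP; apply: measurable_funD; exact: measurable_funM.
move=> u _; rewrite /= lee_fin.
set a := Mre n u; set b := Mre j u; set c := Mim n u; set e := Mim j u.
rewrite [X in _ <= X]ger0_norm; last by nra.
have := sqr_ge0 (a - b); have := sqr_ge0 (c - e).
have := sqr_ge0 (a + b); have := sqr_ge0 (c + e).
by rewrite ler_norml; move=> *; apply/andP; split; nra.
Qed.

Lemma chaos_cross_integral n j :
  (\int[nu]_(u in setT) (Mre n u * Mre j u + Mim n u * Mim j u)%:E =
   ((n == j)%:R * (n`!%:R * k n ^+ 2))%:E)%E.
Proof.
case: chaos => _ _ int_sq orth; have [<-|nj] := eqVneq n j.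
  by under eq_integral do rewrite -!expr2; rewrite int_sq mul1r.
by have [-> _] := orth n j nj; rewrite mul0r.
Qed.

Lemma chaos_partial_sum_norm2 (lam : R) (N : nat) :
  (\int[nu]_(u in setT) ((\sum_(n < N) lam ^+ n * Mre n u) ^+ 2
        + (\sum_(n < N) lam ^+ n * Mim n u) ^+ 2)%:E
  = (\sum_(n < N) n`!%:R * k n ^+ 2 * lam ^+ (2 * n))%:E)%E.
Proof.
transitivity (\int[nu]_(u in setT) (\sum_(i < N) \sum_(j < N)
   ((lam ^+ i * lam ^+ j)%:E
    * (Mre i u * Mre j u + Mim i u * Mim j u)%:E)))%E.
  apply: eq_integral => u _.
  under [RHS]eq_bigr do under eq_bigr do rewrite -EFinM.
  under [RHS]eq_bigr do rewrite sumEFin.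
  rewrite sumEFin; congr EFin.
  rewrite !expr2 !mulr_suml -big_split; apply: eq_bigr => i _.
  by rewrite !mulr_sumr -big_split; apply: eq_bigr => j _ /=; ring.
have termZ_int i j := integrableZl measurableT (lam ^+ i * lam ^+ j)
  (chaos_cross_integrable i j).
rewrite integral_sum //; last by move=> i; apply: integrable_sum.
rewrite -sumEFin; apply: eq_bigr => i _; rewrite integral_sum //.
rewrite (bigD1 i) //= big1 ?adde0.
  rewrite (integralZl _ (chaos_cross_integrable i i)) // chaos_cross_integral.
  by rewrite eqxx mul1r -EFinM -exprD addnn -mul2n mulrC.
move=> j ji; rewrite (integralZl _ (chaos_cross_integrable i j)) //.
rewrite chaos_cross_integral.
have /negbTE -> : (i : nat) != j by rewrite eq_sym.
by rewrite mul0r mule0.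
Qed.

Lemma S_norm2_series (lam : R) :
  (S_norm2 nu Mre Mim lam =
   \sum_(0 <= n <oo) (n`!%:R * k n ^+ 2 * lam ^+ (2 * n))%:E)%E.
Proof.
rewrite /S_norm2; congr (limn _); apply/funext => N.
by rewrite chaos_partial_sum_norm2 -sumEFin big_mkord.
Qed.

End chaos_monomials.

Theorem theorem2p11 (R : realType) (d : measure_display)
  (Omega : measurableType d) (nu : probability Omega R)
  (k : nat -> R) (Mre Mim : nat -> Omega -> R) (m : nat) :
  (forall n, 0 <= k n) ->
  chaos_monomials nu k Mre Mim ->
  in_Gdual k ->
  (0 < m)%N ->
  (in_D_neg m k <-> (iter_int m (S_norm2 nu Mre Mim) 1 < +oo)%E).
Proof.
move=> _ chaos _ _.
pose a n := n`!%:R * k n ^+ 2.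
pose w n := (1 + n%:R) ^- m : R.
pose ff n := ((2 * n + m)%N ^_ m)%:R : R.
have a_ge0 n : 0 <= a n by rewrite mulr_ge0 ?ler0n ?sqr_ge0.
have w_ge0 n : 0 <= w n by rewrite /w invr_ge0 exprn_ge0 ?addr_ge0 ?ler01 ?ler0n.
have ffV_ge0 n : 0 <= (ff n)^-1 by rewrite /ff invr_ge0 ler0n.
have D_neg_series : (\sum_(0 <= n <oo) ((1 + n%:R) ^- m * n`!%:R * k n ^+ 2)%:E
    = \sum_(0 <= n <oo) (w n * a n)%:E)%E.
  by apply: eq_eseriesr => n _; rewrite /w /a mulrA.
have iter_series : (\sum_(0 <= n <oo) (a n * 1 ^+ (2 * n + m) / ff n)%:E
    = \sum_(0 <= n <oo) (a n / ff n)%:E)%E.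
  by apply: eq_eseriesr => n _; rewrite expr1n mulr1.
rewrite /in_D_neg D_neg_series (iter_int_nneseries_exprn m a_ge0
  (fun x _ => S_norm2_series chaos x) ler01) iter_series.
split.
- apply: (nneseries_lty_le (c := 1)) => [|n|n]; first exact: ltr01.
  + exact: mulr_ge0.
  + by rewrite mul1r mulrC ler_wpM2r // inv_ffact_double_le.
- apply: (nneseries_lty_le (c := (m.+2 ^ m)%:R)) => [|n|n].
  + by rewrite ltr0n expn_gt0.
  + exact: mulr_ge0.
  + by rewrite mulrC mulrCA ler_wpM2l // le_inv_ffact_double.
Qed.
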